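(* Let $G=(V,E)$ be a simple undirected graph and let $i\in V$ have degree $\delta$. Let $S$ be the induced star returned by the Simple Greedy algorithm (described in the context) started at $i$. Then Simple Greedy has approximation ratio $O(\delta)$: the star degree centrality $\mathcal{C}^s(i)$ satisfies $\mathcal{C}^s(i)/|N(S)| = O(\delta)$.
   Context: For $S\subseteq V$, $N(S)=\{j\in V\setminus S : (a,j)\in E \text{ for some } a\in S\}$ and $N[j]=N(\{j\})\cup\{j\}$. A set $S$ forms an induced star if $G[S]$ has exactly one node of degree $|S|-1$ (the center) and $|S|-1$ nodes of degree $1$. The star degree centrality of $i$ is $\mathcal{C}^s(i)=\max\{|N(S)| : S\subseteq V \text{ forms an induced star centered at } i\}$. Define $f_1(S,k)=|N(S\cup\{k\})|-|N(S)|$. Simple Greedy on input $i$: set $candidates\leftarrow N(i)$, $S\leftarrow\{i\}$. While $candidates\neq\emptyset$: remove from $candidates$ every $k$ with $f_1(S,k)\leq 0$; if $candidates\neq\emptyset$, pick $j\in\arg\max_{k\in candidates} f_1(S,k)$, set $S\leftarrow S\cup\{j\}$ and $candidates\leftarrow candidates\setminus N[j]$. Return $S$. *)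

(* A simple undirected graph on a finite vertex type T is a
   symmetric irreflexive relation e : rel T. *)
From mathcomp Require Import all_boot all_order all_algebra.
Set Implicit Arguments. Unset Strict Implicit. Unset Printing Implicit Defensive.
Import GRing.Theory Num.Theory.

Section Graph.
Variables (T : finType) (e : rel T).

Definition nbhd (S : {set T}) : {set T} :=
  [set j | (j \notin S) && [exists a in S, e a j]].

Definition cnbhd (j : T) : {set T} := j |: nbhd [set j].

Definition deg (i : T) : nat := #|[set j | e i j]|.

Definition deg_in (S : {set T}) (v : T) : nat := #|[set u in S | e v u]|.

Definition induced_star_at (S : {set T}) (i : T) : bool :=
  [&& i \in S, deg_in S i == #|S| - 1 &
      [forall v in S, (v != i) ==> (deg_in S v == 1)]].

Definition star_centrality (i : T) : nat :=
  \max_(S : {set T} | induced_star_at S i) #|nbhd S|.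

Definition f1 (S : {set T}) (k : T) : int :=
  (#|nbhd (k |: S)|%:Z - #|nbhd S|%:Z)%R.

(* greedy_run S cand R : starting from the state (S, candidates = cand) of the
   while loop, some execution of Simple Greedy (ties in argmax broken
   arbitrarily) returns R. *)
Inductive greedy_run : {set T} -> {set T} -> {set T} -> Prop :=
| greedy_stop (S cand : {set T}) :
    [set k in cand | (0 < f1 S k)%R] = set0 ->
    greedy_run S cand S
| greedy_step (S cand : {set T}) (j : T) (R : {set T}) :
    j \in [set k in cand | (0 < f1 S k)%R] ->
    (forall k, k \in [set k in cand | (0 < f1 S k)%R] -> (f1 S k <= f1 S j)%R) ->
    greedy_run (j |: S) ([set k in cand | (0 < f1 S k)%R] :\: cnbhd j) R ->
    greedy_run S cand R.

Definition simple_greedy_output (i : T) (S : {set T}) : Prop :=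
  greedy_run [set i] (nbhd [set i]) S.

End Graph.

(* Every leaf l of an induced star centred at i is a neighbour of i, and the
   neighbourhood of the star is covered by the neighbourhoods N({i, l}).  Each
   such l is an initial candidate of Simple Greedy, and the greedy output
   dominates every initial candidate: a candidate of positive gain gains at most
   as much as the first chosen vertex, one of non-positive gain does not beat
   N({i}), and |N(S)| only grows along the run.  Hence
   C^s(i) <= deg(i) * |N(S)|. *)
From mathcomp Require Import all_boot all_order all_algebra.
Import GRing.Theory Num.Theory.
Set Implicit Arguments. Unset Strict Implicit.

Lemma leq_card_bigcup (T I : finType) (L : {set I}) (F : I -> {set T}) :
  #|\bigcup_(l in L) F l| <= \sum_(l in L) #|F l|.
Proof.
apply: (big_ind2 (fun (A : {set T}) (n : nat) => #|A| <= n)) => //.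
- by rewrite cards0.
- move=> A m B n leAm leBn; rewrite cardsU.
  exact: leq_trans (leq_subr _ _) (leq_add leAm leBn).
Qed.

Section Neighbourhoods.
Variables (T : finType) (e : rel T).

Lemma mem_nbhd (A S : {set T}) (a x : T) :
  A \subset S -> a \in A -> e a x -> x \notin S -> x \in nbhd e A.
Proof.
move=> sAS aA eax xS; rewrite inE; apply/andP; split.
  by apply: contra xS; apply: (subsetP sAS).
by apply/existsP; exists a; rewrite aA.
Qed.

Lemma f1_le0 (S : {set T}) (k : T) :
  (f1 e S k <= 0)%R = (#|nbhd e (k |: S)| <= #|nbhd e S|).
Proof. by rewrite /f1 subr_le0 lez_nat. Qed.

Lemma f1_gt0 (S : {set T}) (k : T) :
  (0 < f1 e S k)%R = (#|nbhd e S| < #|nbhd e (k |: S)|).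
Proof. by rewrite /f1 subr_gt0 ltz_nat. Qed.

Lemma f1_le (S : {set T}) (k j : T) :
  (f1 e S k <= f1 e S j)%R = (#|nbhd e (k |: S)| <= #|nbhd e (j |: S)|).
Proof. by rewrite /f1 lerD2r lez_nat. Qed.

Hypothesis irr_e : irreflexive e.

Lemma nbhd_set1 (i : T) : nbhd e [set i] = [set j | e i j].
Proof.
apply/setP=> j; rewrite !inE; apply/andP/idP => [[_ /existsP [a]]|eij].
  by rewrite inE => /andP [/eqP ->].
split; last by apply/existsP; exists i; rewrite inE eqxx.
by apply: contraL eij => /eqP ->; rewrite irr_e.
Qed.

Lemma card_nbhd_set1 (i : T) : #|nbhd e [set i]| = deg e i.
Proof. by rewrite nbhd_set1. Qed.

(* Both sides have #|S| - 1 elements; irreflexivity gives the inclusion. *)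
Lemma induced_star_leaves (S : {set T}) (i : T) :
  induced_star_at e S i -> S :\ i = [set u in S | e i u].
Proof.
case/and3P=> iS /eqP degi _; apply/esym/eqP; rewrite eqEcard; apply/andP; split.
  apply/subsetP=> u; rewrite !inE => /andP [uS eiu]; rewrite uS andbT.
  by apply: contraL eiu => /eqP ->; rewrite irr_e.
by rewrite /deg_in in degi; rewrite degi (cardsD1 i S) iS add1n subn1.
Qed.

Lemma nbhd_star_subset (S : {set T}) (i l0 : T) :
  i \in S -> l0 \in S :\ i ->
  nbhd e S \subset \bigcup_(l in S :\ i) nbhd e (l |: [set i]).
Proof.
move=> iS l0L; apply/subsetP=> x; rewrite inE => /andP [xS /existsP [a]].
case/andP=> aS eax; have [ai|ani] := eqVneq a i.
  apply/bigcupP; exists l0 => //; apply: (mem_nbhd _ _ eax xS).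
    by rewrite subUset sub1set (subsetP (subsetDl S [set i])) //= sub1set.
  by rewrite ai !inE eqxx orbT.
have aL : a \in S :\ i by rewrite !inE ani.
apply/bigcupP; exists a => //; apply: (mem_nbhd _ _ eax xS); last exact: setU11.
by rewrite subUset !sub1set aS.
Qed.

Lemma star_centrality_le_deg_mul (i : T) (M : nat) :
  #|nbhd e [set i]| <= M ->
  (forall l, e i l -> #|nbhd e (l |: [set i])| <= M) ->
  star_centrality e i <= deg e i * M.
Proof.
move=> leNiM leNilM; apply/bigmax_leqP => S star_S.
have leavesE := induced_star_leaves star_S.
have iS : i \in S by case/and3P: star_S.
case: (set_0Vmem (S :\ i)) => [L0|[l0 l0L]].
  have -> : S = [set i].
    apply/setP=> u; rewrite inE; apply/idP/eqP => [uS|-> //].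
    apply/eqP; apply: contraT => ui.
    by rewrite -(in_set0 u) -L0 !inE ui.
  rewrite card_nbhd_set1; case: (posnP (deg e i)) => [-> //|deg_gt0].
  by rewrite leq_pmulr // (leq_trans deg_gt0) // -card_nbhd_set1.
apply: leq_trans (subset_leq_card (nbhd_star_subset iS l0L)) _.
apply: leq_trans (leq_card_bigcup _ _) _.
apply: (@leq_trans (\sum_(l in S :\ i) M)).
  by apply: leq_sum => l; rewrite leavesE inE => /andP [_ /leNilM].
rewrite sum_nat_const leq_mul2r leavesE; apply/orP; right.
by apply: subset_leq_card; apply/subsetP=> u; rewrite !inE => /andP [].
Qed.

End Neighbourhoods.

Section Greedy.
Variables (T : finType) (e : rel T).

Lemma greedy_run_nbhd_mono (S cand R : {set T}) :
  greedy_run e S cand R -> #|nbhd e S| <= #|nbhd e R|.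
Proof.
elim=> {S cand R} // S cand j R + _ _ IH.
by rewrite inE f1_gt0 => /andP [_ /ltnW/leq_trans]; apply.
Qed.

Lemma greedy_run_candidate (S cand R : {set T}) (k : T) :
  greedy_run e S cand R -> k \in cand -> #|nbhd e (k |: S)| <= #|nbhd e R|.
Proof.
move=> run kc; have mono := greedy_run_nbhd_mono run.
have [k_gain_le0|k_gain_gt0] := lerP (f1 e S k) 0.
  by apply: leq_trans mono; rewrite -f1_le0.
have k_pos : k \in [set k in cand | (0 < f1 e S k)%R] by rewrite inE kc.
case: run k_pos {mono} => {R} [S' cand' none|S' cand' j R _ j_max run_j].
  by rewrite none inE.
move=> k_pos; apply: leq_trans (greedy_run_nbhd_mono run_j).
by rewrite -f1_le; apply: j_max.
Qed.

End Greedy.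

Theorem theorem3 :
  exists c : nat,
    forall (T : finType) (e : rel T), symmetric e -> irreflexive e ->
    forall (i : T) (S : {set T}),
      simple_greedy_output e i S ->
      star_centrality e i <= c * deg e i * #|nbhd e S|.
Proof.
exists 1 => T e _ irr_e i S greedy_S; rewrite mul1n.
apply: star_centrality_le_deg_mul => //; first exact: greedy_run_nbhd_mono greedy_S.
by move=> l eil; apply: greedy_run_candidate greedy_S _; rewrite nbhd_set1 // inE.
Qed.
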